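(* Let $\Lambda$ be a unital commutative ring, $q$ a non-negative integer, $\mathfrak g$ a Lie algebra over $\Lambda$ and $\mathfrak h$ an ideal of $\mathfrak g$. (i) There is a Lie algebra homomorphism $\xi^{\otimes}\colon\mathfrak h\otimes^q\mathfrak g\to\mathfrak g$ with $\xi^{\otimes}(h\otimes g)=[h,g]$ and (when $q\ge1$) $\xi^{\otimes}(\{h\})=qh$ for $h\in\mathfrak h$, $g\in\mathfrak g$; moreover $\xi^{\otimes}$ factors through the canonical projection $\mathfrak h\otimes^q\mathfrak g\to\mathfrak h\wedge^q\mathfrak g$, inducing a Lie homomorphism $\xi^{\wedge}\colon\mathfrak h\wedge^q\mathfrak g\to\mathfrak g$. (ii) For $q\ge1$: the images of $\xi^{\otimes}$ and $\xi^{\wedge}$ lie in $\mathfrak h$, and for every $x\in\mathfrak h\otimes^q\mathfrak g$ one has $\{\xi^{\otimes}(x)\}=qx$, and for every $x\in\mathfrak h\wedge^q\mathfrak g$ one has $\{\xi^{\wedge}(x)\}=qx$.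
   Context: All Lie algebras are over $\Lambda$. For $q\ge1$, the non-abelian $q$-tensor product $\mathfrak h\otimes^q\mathfrak g$ is the Lie algebra generated by symbols $h\otimes g$ and $\{h\}$ ($h\in\mathfrak h$, $g\in\mathfrak g$) subject to, for all $h,h'\in\mathfrak h$, $g,g'\in\mathfrak g$, $\lambda,\lambda'\in\Lambda$: (1) $\lambda(h\otimes g)=\lambda h\otimes g=h\otimes\lambda g$; (2) $(h+h')\otimes g=h\otimes g+h'\otimes g$; (3) $h\otimes(g+g')=h\otimes g+h\otimes g'$; (4) $[h,h']\otimes g=h\otimes[h',g]-h'\otimes[h,g]$; (5) $h\otimes[g,g']=[g',h]\otimes g-[g,h]\otimes g'$; (6) $[h\otimes g,h'\otimes g']=[h,g]\otimes[h',g']$; (7) $[\{h'\},h\otimes g]=[qh',h]\otimes g+h\otimes[qh',g]$; (8) $\{\lambda h+\lambda'h'\}=\lambda\{h\}+\lambda'\{h'\}$; (9) $[\{h\},\{h'\}]=qh\otimes qh'$; (10) $\{[h,g]\}=q(h\otimes g)$. For $q=0$, $\mathfrak h\otimes^0\mathfrak g$ is generated by the symbols $h\otimes g$ subject to (1)–(6) only (Ellis's non-abelian tensor product). The non-abelian $q$-exterior product $\mathfrak h\wedge^q\mathfrak g$ is the quotient of $\mathfrak h\otimes^q\mathfrak g$ by the relations $h\otimes h=0$, $h\in\mathfrak h$; images of generators are written $h\wedge g$ and $\{h\}$. *)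

From HB Require Import structures.
From mathcomp Require Import all_boot all_algebra.
Set Implicit Arguments. Unset Strict Implicit. Unset Printing Implicit Defensive.
Import GRing.Theory.
Local Open Scope ring_scope.

Definition is_lie (R : comPzRingType) (L : lmodType R) (br : L -> L -> L) : Prop :=
  [/\ (forall (a b : R) (x y z : L), br (a *: x + b *: y) z = a *: br x z + b *: br y z),
      (forall (a b : R) (x y z : L), br z (a *: x + b *: y) = a *: br z x + b *: br z y),
      (forall x : L, br x x = 0) &
      (forall x y z : L, br x (br y z) + br y (br z x) + br z (br x y) = 0)].

Definition is_lie_ideal (R : comPzRingType) (L : lmodType R) (br : L -> L -> L)
  (hP : L -> Prop) : Prop :=
  [/\ hP 0,
      (forall x y, hP x -> hP y -> hP (x + y)),
      (forall (a : R) x, hP x -> hP (a *: x)) &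
      (forall x y, hP x -> hP (br x y))].

(** Terms of the free (non-associative) R-algebra on the generators
    h (x) g  (TT a g, a in h, g in L)  and  {h}  (TC a, a in h). *)
Unset Implicit Arguments.
Inductive tterm (R : comPzRingType) (L : lmodType R) (hP : L -> Prop) : Type :=
| TZero
| TAdd of tterm R L hP & tterm R L hP
| TOpp of tterm R L hP
| TScale of R & tterm R L hP
| TBr of tterm R L hP & tterm R L hP
| TT of {x : L | hP x} & L
| TC of {x : L | hP x}.

Set Implicit Arguments.
Arguments TZero {R L hP}.
Arguments TAdd {R L hP}.
Arguments TOpp {R L hP}.
Arguments TScale {R L hP}.
Arguments TBr {R L hP}.
Arguments TT {R L hP}.
Arguments TC {R L hP}.

Fixpoint tmuln (R : comPzRingType) (L : lmodType R) (hP : L -> Prop)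
  (x : tterm R L hP) (n : nat) : tterm R L hP :=
  match n with
  | 0 => TZero
  | S k => TAdd x (tmuln x k)
  end.

(** The congruence defining the non-abelian q-tensor product (ext = false)
    resp. the q-exterior product (ext = true): the smallest congruence on
    terms containing the Lie algebra axioms and relations (1)-(10)
    (when q >= 1), resp. (1)-(6) plus {h} = 0 when q = 0 (so the extra
    generators {h} vanish and one recovers Ellis's tensor product);
    for ext = true additionally h (x) h = 0. *)
Section Rel.
Variables (R : comPzRingType) (L : lmodType R) (br : L -> L -> L)
  (hP : L -> Prop) (q : nat) (ext : bool).
Notation T := (tterm R L hP).
Notation H := {x : L | hP x}.

Inductive tequiv : T -> T -> Prop :=
| te_refl x : tequiv x x
| te_sym x y : tequiv x y -> tequiv y x
| te_trans x y z : tequiv x y -> tequiv y z -> tequiv x z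
| te_add x x' y y' : tequiv x x' -> tequiv y y' -> tequiv (TAdd x y) (TAdd x' y')
| te_opp x x' : tequiv x x' -> tequiv (TOpp x) (TOpp x')
| te_scale (a : R) x x' : tequiv x x' -> tequiv (TScale a x) (TScale a x')
| te_br x x' y y' : tequiv x x' -> tequiv y y' -> tequiv (TBr x y) (TBr x' y')
| te_addA x y z : tequiv (TAdd x (TAdd y z)) (TAdd (TAdd x y) z)
| te_addC x y : tequiv (TAdd x y) (TAdd y x)
| te_add0 x : tequiv (TAdd TZero x) x
| te_addN x : tequiv (TAdd (TOpp x) x) TZero
| te_scaleA (a b : R) x : tequiv (TScale a (TScale b x)) (TScale (a * b) x)
| te_scale1 x : tequiv (TScale 1 x) x
| te_scaleDr (a : R) x y : tequiv (TScale a (TAdd x y)) (TAdd (TScale a x) (TScale a y))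
| te_scaleDl (a b : R) x : tequiv (TScale (a + b) x) (TAdd (TScale a x) (TScale b x))
| te_brDl x y z : tequiv (TBr (TAdd x y) z) (TAdd (TBr x z) (TBr y z))
| te_brDr x y z : tequiv (TBr z (TAdd x y)) (TAdd (TBr z x) (TBr z y))
| te_brZl (a : R) x y : tequiv (TBr (TScale a x) y) (TScale a (TBr x y))
| te_brZr (a : R) x y : tequiv (TBr x (TScale a y)) (TScale a (TBr x y))
| te_brxx x : tequiv (TBr x x) TZero
| te_jacobi x y z :
    tequiv (TAdd (TAdd (TBr x (TBr y z)) (TBr y (TBr z x))) (TBr z (TBr x y))) TZero
| te_r1a (l : R) (a c : H) g : sval c = l *: sval a ->
    tequiv (TScale l (TT a g)) (TT c g)
| te_r1b (l : R) (a : H) g : tequiv (TScale l (TT a g)) (TT a (l *: g))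
| te_r2 (a b c : H) g : sval c = sval a + sval b ->
    tequiv (TT c g) (TAdd (TT a g) (TT b g))
| te_r3 (a : H) g g' : tequiv (TT a (g + g')) (TAdd (TT a g) (TT a g'))
| te_r4 (a b c : H) g : sval c = br (sval a) (sval b) ->
    tequiv (TT c g) (TAdd (TT a (br (sval b) g)) (TOpp (TT b (br (sval a) g))))
| te_r5 (a c d : H) g g' : sval c = br g' (sval a) -> sval d = br g (sval a) ->
    tequiv (TT a (br g g')) (TAdd (TT c g) (TOpp (TT d g')))
| te_r6 (a b c : H) g g' : sval c = br (sval a) g ->
    tequiv (TBr (TT a g) (TT b g')) (TT c (br (sval b) g'))
| te_r7 (a b c : H) g : (0 < q)%N -> sval c = br (sval b *+ q) (sval a) ->
    tequiv (TBr (TC b) (TT a g)) (TAdd (TT c g) (TT a (br (sval b *+ q) g)))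
| te_r8 (l l' : R) (a b c : H) : (0 < q)%N -> sval c = l *: sval a + l' *: sval b ->
    tequiv (TC c) (TAdd (TScale l (TC a)) (TScale l' (TC b)))
| te_r9 (a b c : H) : (0 < q)%N -> sval c = sval a *+ q ->
    tequiv (TBr (TC a) (TC b)) (TT c (sval b *+ q))
| te_r10 (a c : H) g : (0 < q)%N -> sval c = br (sval a) g ->
    tequiv (TC c) (tmuln (TT a g) q)
| te_q0 (a : H) : q = 0%N -> tequiv (TC a) TZero
| te_ext (a : H) : ext = true -> tequiv (TT a (sval a)) TZero.
End Rel.

Definition induces_lie_hom (R : comPzRingType) (L : lmodType R) (br : L -> L -> L)
  (hP : L -> Prop) (q : nat) (ext : bool) (f : tterm R L hP -> L) : Prop :=
  (forall x y, tequiv br q ext x y -> f x = f y) /\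
  [/\ f TZero = 0,
      (forall x y, f (TAdd x y) = f x + f y),
      (forall x, f (TOpp x) = - f x),
      (forall (a : R) x, f (TScale a x) = a *: f x) &
      (forall x y, f (TBr x y) = br (f x) (f y))].

(* It respects the defining
   congruence because every relation holds in g: relations (4), (5) and (7) are
   instances of the Jacobi identity and h (x) h = 0 becomes [h, h] = 0; its values
   lie in h because h is an ideal.
   For (ii) the key fact is that a generator {k} acts on terms through xi,
   [{k}, x] = {[k, xi x]}, by induction on x using (7), (9), (10) and, for
   brackets, the Jacobi identity on both sides. Then {xi x} = q x by induction on
   x, the bracket case being {[xi x, xi y]} = [{xi x}, y] = [q x, y] = q [x, y]. *)

From HB Require Import structures.
From mathcomp Require Import all_boot all_algebra.
From Stdlib Require Import Setoid Morphisms.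
Set Implicit Arguments. Unset Strict Implicit. Unset Printing Implicit Defensive.
Import GRing.Theory.
Local Open Scope ring_scope.

Section NonAbelianTensor.
Variables (R : comPzRingType) (L : lmodType R) (br : L -> L -> L).
Hypothesis br_lie : is_lie br.

Lemma brDl x y z : br (x + y) z = br x z + br y z.
Proof. by case: br_lie => linl _ _ _; have := linl 1 1 x y z; rewrite !scale1r. Qed.

Lemma brDr x y z : br z (x + y) = br z x + br z y.
Proof. by case: br_lie => _ linr _ _; have := linr 1 1 x y z; rewrite !scale1r. Qed.

Lemma brZl a x z : br (a *: x) z = a *: br x z.
Proof. by case: br_lie => linl _ _ _; have := linl a 0 x x z; rewrite !scale0r !addr0. Qed.

Lemma brZr a x z : br z (a *: x) = a *: br z x.
Proof. by case: br_lie => _ linr _ _; have := linr a 0 x x z; rewrite !scale0r !addr0. Qed.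

Lemma br0r z : br z 0 = 0.
Proof. by have := brZr 0 z z; rewrite !scale0r. Qed.

Lemma brNl x z : br (- x) z = - br x z.
Proof. by rewrite -scaleN1r brZl scaleN1r. Qed.

Lemma brNr x z : br z (- x) = - br z x.
Proof. by rewrite -scaleN1r brZr scaleN1r. Qed.

Lemma brMnl x z n : br (x *+ n) z = br x z *+ n.
Proof. by rewrite -!scaler_nat brZl. Qed.

Lemma brxx x : br x x = 0.
Proof. by case: br_lie. Qed.

Lemma brC x y : br y x = - br x y.
Proof.
apply/eqP; rewrite -addr_eq0 addrC.
by have := brxx (x + y); rewrite brDl !brDr !brxx add0r addr0 => ->.
Qed.

Lemma br_der x y z : br x (br y z) = br (br x y) z + br y (br x z).
Proof.
case: br_lie => _ _ _ /(_ x y z) /eqP.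
rewrite (brC (br x y) z) (brC x z) brNr -addrA addr_eq0 opprD !opprK addrC.
by move/eqP.
Qed.

Variables (hP : L -> Prop) (q : nat) (ext : bool).
Local Notation T := (tterm R L hP).
Local Notation E := (@tequiv R L br hP q ext).
Local Notation "x =~ y" := (E x y) (at level 70).

#[local] Instance tequiv_Equivalence : Equivalence E.
Proof. by split; [exact: te_refl | exact: te_sym | exact: te_trans]. Qed.
#[local] Instance TAdd_Proper : Proper (E ==> E ==> E) TAdd.
Proof. by move=> ? ? ? ? ? ?; apply: te_add. Qed.
#[local] Instance TOpp_Proper : Proper (E ==> E) TOpp.
Proof. by move=> ? ? ?; apply: te_opp. Qed.
#[local] Instance TScale_Proper a : Proper (E ==> E) (TScale a).
Proof. by move=> ? ? ?; apply: te_scale. Qed.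
#[local] Instance TBr_Proper : Proper (E ==> E ==> E) TBr.
Proof. by move=> ? ? ? ? ? ?; apply: te_br. Qed.
#[local] Hint Resolve te_refl : core.

Lemma te_add0r (x : T) : TAdd x TZero =~ x.
Proof. by rewrite te_addC te_add0. Qed.

Lemma te_addACA (a b c d : T) :
  TAdd (TAdd a b) (TAdd c d) =~ TAdd (TAdd a c) (TAdd b d).
Proof. by rewrite -te_addA (te_addA _ _ _ b) (te_addC _ _ _ b c) -te_addA te_addA. Qed.

Lemma te_addIl (a x y : T) : TAdd a x =~ TAdd a y -> x =~ y.
Proof.
have cancel z : z =~ TAdd (TOpp a) (TAdd a z) by rewrite te_addA te_addN te_add0.
by move=> e; rewrite (cancel x) e -cancel.
Qed.

Lemma te_oppP (x y : T) : TAdd x y =~ TZero -> y =~ TOpp x.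
Proof.
move=> e; transitivity (TAdd (TOpp x) (TAdd x y)); last by rewrite e te_add0r.
by rewrite te_addA te_addN te_add0.
Qed.

Lemma te_oppK (x : T) : TOpp (TOpp x) =~ x.
Proof. by symmetry; apply/te_oppP/te_addN. Qed.

Lemma te_scale0 (x : T) : TScale 0 x =~ TZero.
Proof.
apply: (@te_addIl (TScale 0 x)).
by rewrite te_add0r -te_scaleDl addr0.
Qed.

Lemma te_scaleN1 (x : T) : TScale (-1) x =~ TOpp x.
Proof.
apply: te_oppP; rewrite -{1}(te_scale1 _ _ _ x) -te_scaleDl.
by rewrite subrr te_scale0.
Qed.

Lemma te_scaler0 a : TScale a (TZero : T) =~ TZero.
Proof. by rewrite -(te_scale0 TZero) te_scaleA mulr0. Qed.

Lemma te_opp0 : TOpp (TZero : T) =~ TZero.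
Proof. by rewrite -te_scaleN1 te_scaler0. Qed.

Lemma te_oppD (x y : T) : TOpp (TAdd x y) =~ TAdd (TOpp x) (TOpp y).
Proof. by rewrite -!te_scaleN1 te_scaleDr. Qed.

Lemma te_br0l (y : T) : TBr TZero y =~ TZero.
Proof. by rewrite -{1}(te_scale0 TZero) te_brZl te_scale0. Qed.

Lemma te_br0r (y : T) : TBr y TZero =~ TZero.
Proof. by rewrite -{1}(te_scale0 TZero) te_brZr te_scale0. Qed.

Lemma te_brNr (x y : T) : TBr x (TOpp y) =~ TOpp (TBr x y).
Proof. by rewrite -!te_scaleN1 te_brZr. Qed.

Lemma te_brC (x y : T) : TBr y x =~ TOpp (TBr x y).
Proof.
apply: te_oppP; have e := te_brxx br q ext (TAdd x y).
by rewrite te_brDl !te_brDr !te_brxx te_add0 te_add0r in e.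
Qed.

Lemma te_br_der (k x y : T) :
  TBr k (TBr x y) =~ TAdd (TBr (TBr k x) y) (TBr x (TBr k y)).
Proof.
have /te_oppP -> := te_jacobi br q ext x y k.
by rewrite te_oppD (te_brC k y) te_brNr te_oppK -(te_brC y) te_addC.
Qed.

Lemma te_tmul0n n : tmuln (TZero : T) n =~ TZero.
Proof. by elim: n => //= n ->; rewrite te_add0. Qed.

Lemma te_tmulnD (x y : T) n : tmuln (TAdd x y) n =~ TAdd (tmuln x n) (tmuln y n).
Proof. by elim: n => /= [|n ->]; rewrite ?te_add0 // te_addACA. Qed.

Lemma te_tmulnN (x : T) n : tmuln (TOpp x) n =~ TOpp (tmuln x n).
Proof. by elim: n => /= [|n ->]; rewrite ?te_opp0 ?te_oppD. Qed.

Lemma te_tmulnZ a (x : T) n : tmuln (TScale a x) n =~ TScale a (tmuln x n).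
Proof. by elim: n => /= [|n ->]; rewrite ?te_scaler0 ?te_scaleDr. Qed.

Lemma te_br_tmulnl (x y : T) n : TBr (tmuln x n) y =~ tmuln (TBr x y) n.
Proof. by elim: n => /= [|n <-]; rewrite ?te_br0l ?te_brDl. Qed.

Fixpoint xi (x : T) : L :=
  match x with
  | TZero => 0
  | TAdd x y => xi x + xi y
  | TOpp x => - xi x
  | TScale a x => a *: xi x
  | TBr x y => br (xi x) (xi y)
  | TT a g => br (sval a) g
  | TC a => sval a *+ q
  end.

Lemma xi_tmuln x n : xi (tmuln x n) = xi x *+ n.
Proof. by elim: n => //= n ->; rewrite mulrS. Qed.

Lemma tequiv_xi x y : x =~ y -> xi x = xi y.
Proof.
case: (br_lie) => _ _ br_alt br_jacobi.
elim=> {x y} /=; intros; subst=> //;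
  repeat match goal with e : sval _ = _ |- _ => rewrite e; clear e end;
  try congruence.
all: first [exact: addrA | exact: addrC | exact: add0r | exact: addNr
  | exact: scalerA | exact: scale1r | exact: scalerDr | exact: scalerDl
  | exact: brDl | exact: brDr | exact: brZl | exact: brZr | idtac].
- by rewrite brZl.
- by rewrite brZr.
- by rewrite br_der addrK.
- by rewrite br_der (brC (sval a) g') (brC (sval a) g) !brNl opprK -brC addrC.
- exact: br_der.
- by rewrite mulrnDl !scalerMnr.
- by rewrite xi_tmuln.
Qed.

Lemma xi_lie_hom : induces_lie_hom br q ext xi.
Proof. by split; [exact: tequiv_xi | split]. Qed.

Hypothesis hP_ideal : is_lie_ideal br hP.

Lemma hP0 : hP 0.
Proof. by case: hP_ideal. Qed.

Lemma hPD x y : hP x -> hP y -> hP (x + y).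
Proof. by case: hP_ideal => _ closedD _ _; apply: closedD. Qed.

Lemma hPZ a x : hP x -> hP (a *: x).
Proof. by case: hP_ideal => _ _ closedZ _; apply: closedZ. Qed.

Lemma hPbr x y : hP x -> hP (br x y).
Proof. by case: hP_ideal => _ _ _ closed_br; apply: closed_br. Qed.

Lemma hPN x : hP x -> hP (- x).
Proof. by rewrite -scaleN1r; apply: hPZ. Qed.

Lemma hPMn x n : hP x -> hP (x *+ n).
Proof. by rewrite -scaler_nat; apply: hPZ. Qed.

Lemma hP_xi x : hP (xi x).
Proof.
elim: x => [|x hx y hy|x hx|a x hx|x hx y _|[k hk] g|[k hk]] /=.
- exact: hP0.
- exact: hPD.
- exact: hPN.
- exact: hPZ.
- exact: hPbr.
- exact: hPbr.
- exact: hPMn.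
Qed.

Local Notation H := {x : L | hP x}.

Definition hbr (k : H) g : H := exist hP (br (sval k) g) (hPbr g (svalP k)).
Definition hmuln (k : H) n : H := exist hP (sval k *+ n) (hPMn n (svalP k)).
Definition hopp (k : H) : H := exist hP (- sval k) (hPN (svalP k)).
Definition hxi x : H := exist hP (xi x) (hP_xi x).

Lemma TT0l (a : H) g : sval a = 0 -> TT a g =~ TZero.
Proof.
move=> a0; rewrite -(te_scale0 (TT a g)); symmetry.
by apply: te_r1a; rewrite a0 scale0r.
Qed.

Lemma TTMnl (a : H) g n (c : H) : sval c = sval a *+ n -> TT c g =~ tmuln (TT a g) n.
Proof.
elim: n c => [|n IHn] c /= e; first exact: TT0l.
by rewrite (@te_r2 _ _ _ _ _ _ a (hmuln a n)) ?e ?mulrS // (IHn (hmuln a n)).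
Qed.

Lemma TT0r (a : H) : TT a 0 =~ TZero.
Proof. by rewrite -(scale0r 0) -te_r1b te_scale0. Qed.

Lemma TTMnr (a : H) g n : TT a (g *+ n) =~ tmuln (TT a g) n.
Proof. by elim: n => /= [|n <-]; rewrite ?mulr0n ?TT0r // mulrS te_r3. Qed.

Section PositiveQ.
Hypothesis q_gt0 : (0 < q)%N.

Lemma TC_linear l l' (a b c : H) : sval c = l *: sval a + l' *: sval b ->
  TC c =~ TAdd (TScale l (TC a)) (TScale l' (TC b)).
Proof. exact: te_r8. Qed.

Lemma TBr_TC_TT (k a : H) g :
  TBr (TC k) (TT a g) =~ TAdd (TT (hbr (hmuln k q) (sval a)) g) (TT a (br (sval k *+ q) g)).
Proof. exact: te_r7. Qed.

Lemma TBr_TC_TC (a b : H) : TBr (TC a) (TC b) =~ TT (hmuln a q) (sval b *+ q).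
Proof. exact: te_r9. Qed.

Lemma TC_br (a c : H) g : sval c = br (sval a) g -> TC c =~ tmuln (TT a g) q.
Proof. exact: te_r10. Qed.

Lemma TC0 (c : H) : sval c = 0 -> TC c =~ TZero.
Proof.
move=> c0; rewrite (@TC_linear 0 0 c c) ?c0 ?scale0r ?addr0 //.
by rewrite !te_scale0 te_add0.
Qed.

Lemma TCD (a b c : H) : sval c = sval a + sval b -> TC c =~ TAdd (TC a) (TC b).
Proof. by move=> e; rewrite (@TC_linear 1 1 a b) ?e ?scale1r // !te_scale1. Qed.

Lemma TCZ l (a c : H) : sval c = l *: sval a -> TC c =~ TScale l (TC a).
Proof.
by move=> e; rewrite (@TC_linear l 0 a a) ?e ?scale0r ?addr0 // te_scale0 te_add0r.
Qed.

Lemma TCN (a c : H) : sval c = - sval a -> TC c =~ TOpp (TC a).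
Proof. by move=> e; rewrite -te_scaleN1; apply: TCZ; rewrite e scaleN1r. Qed.

Lemma TCMn (a : H) n (c : H) : sval c = sval a *+ n -> TC c =~ tmuln (TC a) n.
Proof.
elim: n c => [|n IHn] c /= e; first exact: TC0.
by rewrite (@TCD a (hmuln a n)) ?e ?mulrS // (IHn (hmuln a n)).
Qed.

Lemma TBr_TC x (k c : H) : sval c = br (sval k) (xi x) -> TBr (TC k) x =~ TC c.
Proof.
elim: x k c => [|x IHx y IHy|x IHx|a x IHx|x IHx y IHy|a g|a] k c /= e.
- by rewrite te_br0r (@TC0 c) // e br0r.
- rewrite te_brDr (IHx k (hbr k (xi x))) // (IHy k (hbr k (xi y))) //.
  by symmetry; apply: TCD; rewrite e brDr.
- rewrite te_brNr (IHx k (hbr k (xi x))) //.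
  by symmetry; apply: TCN; rewrite e brNr.
- rewrite te_brZr (IHx k (hbr k (xi x))) //.
  by symmetry; apply: TCZ; rewrite e brZr.
- rewrite te_br_der (IHx k (hbr k (xi x))) // (IHy _ (hbr (hbr k (xi x)) (xi y))) //.
  rewrite (IHy k (hbr k (xi y))) // (te_brC (TC _) x).
  rewrite (IHx (hbr k (xi y)) (hbr (hbr k (xi y)) (xi x))) //.
  rewrite -(@TCN (hbr (hbr k (xi y)) (xi x)) (hopp (hbr (hbr k (xi y)) (xi x)))) //.
  by symmetry; apply: TCD; rewrite e /= br_der (brC (br _ (xi y))).
- rewrite TBr_TC_TT (@TTMnl (hbr k (sval a))) /=; last exact: brMnl.
  rewrite brMnl TTMnr (@TCD (hbr (hbr k (sval a)) g) (hbr a (br (sval k) g))).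
    by rewrite !TC_br.
  by rewrite e br_der.
- rewrite TBr_TC_TC (@TTMnl k _ q (hmuln k q)) //.
  by symmetry; apply: TC_br.
Qed.

Lemma TC_xi x (c : H) : sval c = xi x -> TC c =~ tmuln x q.
Proof.
elim: x c => [|x IHx y IHy|x IHx|a x IHx|x IHx y IHy|a g|a] c /= e.
- by rewrite te_tmul0n; apply: TC0.
- by rewrite (TCD (a:=hxi x) (b:=hxi y) e) (IHx (hxi x)) // (IHy (hxi y)) // te_tmulnD.
- by rewrite (TCN (a:=hxi x) e) (IHx (hxi x)) // te_tmulnN.
- by rewrite (TCZ (a:=hxi x) e) (IHx (hxi x)) // te_tmulnZ.
- by rewrite -(TBr_TC (k:=hxi x) e) (IHx (hxi x)) // te_br_tmulnl.
- exact: TC_br.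
- exact: TCMn.
Qed.

End PositiveQ.
End NonAbelianTensor.

Theorem lemma2p4 (R : comPzRingType) (q : nat) (L : lmodType R) (br : L -> L -> L)
  (hP : L -> Prop) (Hlie : is_lie br) (Hideal : is_lie_ideal br hP) :
  exists xi : tterm R L hP -> L,
    (* (i) xi^tensor is a Lie homomorphism h (x)^q g -> g *)
    [/\ induces_lie_hom br q false xi,
        (forall (a : {x : L | hP x}) (g : L), xi (TT a g) = br (sval a) g),
        (forall a : {x : L | hP x}, (0 < q)%N -> xi (TC a) = sval a *+ q) &
        (* it factors through the projection h (x)^q g -> h /\^q g,
           inducing a Lie homomorphism xi^wedge *)
        induces_lie_hom br q true xi]
    /\
    (* (ii) *)
    ((0 < q)%N ->
      (forall x : tterm R L hP, hP (xi x)) /\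
      (forall (x : tterm R L hP) (Hx : hP (xi x)),
          tequiv br q false (TC (exist _ (xi x) Hx)) (tmuln x q)) /\
      (forall (x : tterm R L hP) (Hx : hP (xi x)),
          tequiv br q true (TC (exist _ (xi x) Hx)) (tmuln x q))).
Proof.
exists (xi br q); split; first by split=> //; apply: xi_lie_hom.
move=> q_gt0; split; first exact: hP_xi.
by split=> x Hx; apply: TC_xi.
Qed.
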